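(* Let $G$ be a digraph and $f$ a discrete Morse function on $G$. If $v_0v_1\cdots v_nv_0$ ($n\ge1$) is a directed loop in $G$, then $f(v_i)>0$ for every $0\le i\le n$.
   Context: A digraph $G=(V,E)$ consists of a set $V$ and $E\subseteq(V\times V)\setminus\{(v,v)\}$; $(u,v)\in E$ is written $u\to v$. An allowed elementary $n$-path is a sequence $v_0\cdots v_n$ of vertices with $v_{i-1}\to v_i\in E$ for $1\le i\le n$. A directed loop is an allowed elementary path of the form $v_0v_1\cdots v_nv_0$ with $n\ge1$. A map $f:V\to[0,+\infty)$ is a discrete Morse function on $G$ if for every allowed elementary path $v_0\cdots v_n$: (i) there is at most one index $0\le i\le n$ with $f(v_i)=0$ such that $v_0\cdots v_{i-1}v_{i+1}\cdots v_n$ is an allowed elementary $(n-1)$-path; (ii) there is at most one vertex $u$ with $f(u)=0$ such that for some $-1\le j\le n$ the sequence $v_0\cdots v_juv_{j+1}\cdots v_n$ (meaning $uv_0\cdots v_n$ if $j=-1$, $v_0\cdots v_nu$ if $j=n$) is an allowed elementary $(n+1)$-path. *)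

From Stdlib Require Import Reals List Arith.
Import ListNotations.
Open Scope R_scope.

Definition digraph {V : Type} (E : V -> V -> Prop) : Prop :=
  forall v, ~ E v v.

Fixpoint edge_chain {V : Type} (E : V -> V -> Prop) (p : list V) : Prop :=
  match p with
  | [] => True
  | x :: q =>
      match q with
      | [] => True
      | y :: _ => E x y /\ edge_chain E q
      end
  end.

(* An allowed elementary n-path v_0 ... v_n is a list of length n+1 >= 1
   with v_{i-1} -> v_i for 1 <= i <= n. *)
Definition allowed_path {V : Type} (E : V -> V -> Prop) (p : list V) : Prop :=
  p <> [] /\ edge_chain E p.

Definition remove_at {V : Type} (i : nat) (p : list V) : list V :=
  firstn i p ++ skipn (S i) p.

(* insert u after the first j vertices: v_0 ... v_{j-1} u v_j ... v_n
   (j = 0 gives u v_0 ... v_n, j = n+1 gives v_0 ... v_n u) *)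
Definition insert_at {V : Type} (j : nat) (u : V) (p : list V) : list V :=
  firstn j p ++ u :: skipn j p.

Definition discrete_morse {V : Type} (E : V -> V -> Prop) (f : V -> R) : Prop :=
  (forall v, 0 <= f v) /\
  (forall (p : list V) (d : V) (i j : nat),
      allowed_path E p ->
      (i < length p)%nat -> (j < length p)%nat ->
      f (nth i p d) = 0 -> f (nth j p d) = 0 ->
      allowed_path E (remove_at i p) -> allowed_path E (remove_at j p) ->
      i = j) /\
  (forall (p : list V) (u w : V),
      allowed_path E p ->
      f u = 0 -> f w = 0 ->
      (exists j, (j <= length p)%nat /\ allowed_path E (insert_at j u p)) ->
      (exists k, (k <= length p)%nat /\ allowed_path E (insert_at k w p)) ->
      u = w).

(** Removing either end of a closed walk [y ... y] leaves an allowed path, so both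
    occurrences of [y] are deletable vertices of the same path; condition (i)
    therefore forbids [f y = 0].  Every vertex of a directed loop is the base point
    of a rotated closed walk, hence has positive value. *)

From Stdlib Require Import Reals List Lia Lra.
Import ListNotations.
Open Scope R_scope.

Section EdgeChain.

Variables (V : Type) (E : V -> V -> Prop).

Lemma edge_chain_app (l1 l2 : list V) (y : V) :
  edge_chain E (l1 ++ y :: l2) <-> edge_chain E (l1 ++ [y]) /\ edge_chain E (y :: l2).
Proof.
  induction l1 as [|a [|b l1] IH]; cbn in *; tauto.
Qed.

Lemma edge_chain_cons_inv (a : V) (l : list V) :
  edge_chain E (a :: l) -> edge_chain E l.
Proof. destruct l; cbn; tauto. Qed.

Lemma edge_chain_app_inv_l (l1 l2 : list V) :
  edge_chain E (l1 ++ l2) -> edge_chain E l1.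
Proof.
  induction l1 as [|a [|b l1] IH]; cbn in *; tauto.
Qed.

Lemma closed_walk_rotate (x y : V) (A B : list V) :
  edge_chain E (x :: A ++ y :: B ++ [x]) -> edge_chain E (y :: B ++ x :: A ++ [y]).
Proof.
  intros Hwalk.
  apply (edge_chain_app (x :: A)) in Hwalk as [HxAy HyBx].
  exact (proj2 (edge_chain_app (y :: B) _ x) (conj HyBx HxAy)).
Qed.

End EdgeChain.

Lemma remove_at_last {V : Type} (p : list V) (y : V) :
  remove_at (length p) (p ++ [y]) = p.
Proof.
  unfold remove_at.
  rewrite firstn_app, firstn_all, Nat.sub_diag, app_nil_r, skipn_all2; cbn.
  - apply app_nil_r.
  - rewrite length_app; cbn; lia.
Qed.

Lemma morse_nonneg {V : Type} (E : V -> V -> Prop) (f : V -> R) :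
  discrete_morse E f -> forall v, 0 <= f v.
Proof. now intros [Hnonneg _]. Qed.

Lemma morse_closed_walk_base_neq0 {V : Type} (E : V -> V -> Prop) (f : V -> R)
  (y : V) (l : list V) :
  discrete_morse E f -> edge_chain E (y :: l ++ [y]) -> f y <> 0.
Proof.
  intros [_ [Hremove _]] Hwalk Hy.
  set (p := y :: l) in *.
  change (edge_chain E (p ++ [y])) in Hwalk.
  assert (Hlen : length (p ++ [y]) = S (length p)) by (rewrite length_app; cbn; lia).
  assert (Hp : (0 < length p)%nat) by (cbn; lia).
  enough (0%nat = length p) by lia.
  apply (Hremove (p ++ [y]) y).
  - split; [now destruct p | exact Hwalk].
  - lia.
  - lia.
  - exact Hy.
  - rewrite nth_middle; exact Hy.
  - split; [now destruct l | exact (edge_chain_cons_inv V E y _ Hwalk)].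
  - rewrite remove_at_last.
    split; [discriminate | exact (edge_chain_app_inv_l V E p [y] Hwalk)].
Qed.

Theorem lemma4p1 (V : Type) (E : V -> V -> Prop) (f : V -> R)
  (HG : digraph E) (Hf : discrete_morse E f)
  (v0 : V) (vs : list V) (Hn : (1 <= length vs)%nat)
  (Hloop : allowed_path E (v0 :: vs ++ [v0])) :
  forall x, In x (v0 :: vs) -> 0 < f x.
Proof.
  intros x Hx.
  destruct Hloop as [_ Hwalk].
  assert (Hx0 : f x <> 0).
  { destruct Hx as [<- | Hx].
    - exact (morse_closed_walk_base_neq0 E f v0 vs Hf Hwalk).
    - apply in_split in Hx as (A & B & ->).
      rewrite <- app_assoc in Hwalk.
      apply (morse_closed_walk_base_neq0 E f x (B ++ v0 :: A) Hf).
      rewrite <- app_assoc.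
      exact (closed_walk_rotate V E v0 x A B Hwalk). }
  pose proof (morse_nonneg E f Hf x); lra.
Qed.
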